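(* Assume the network is regular, and let $j^*\in\mathcal E$ be a single child, i.e. there is $m^*\in\mathcal M$ with $m^*\vdash j^*$ such that $m^*\vdash j$ implies $j=j^*$. Then (a) such $m^*$ is unique; (b) $j^*$ influences no reaction: $j^*\not\leadsto j$ for every $j\in\mathcal E$ (including $j=j^*$); (c) the only metabolite influenced by $j^*$ is $m^*$: $j^*\leadsto m^*$ and $j^*\not\leadsto m'$ for every $m'\neq m^*$.
   Context: A reaction network consists of a finite set of metabolites $\mathcal M=\{1,\dots,M\}$ and a finite set of reactions $\mathcal E=\{1,\dots,E\}$. Each reaction $j$ has an input stoichiometric vector $y^j\in\mathbb R_{\ge0}^M$ and an output stoichiometric vector $\bar y^j\in\mathbb R_{\ge0}^M$. Write $m\vdash j$ iff $y^j_m\neq 0$. The stoichiometric matrix $S$ is the real $M\times E$ matrix whose $j$-th column is $S^j=\bar y^j-y^j$; it is assumed to have full rank $M$. The rate matrix $R=(r_{jm})$ is the $E\times M$ matrix whose entries $r_{jm}$ with $m\vdash j$ are independent indeterminates, and $r_{jm}=0$ whenever $m\not\vdash j$. ''Nonzero algebraically'' means nonzero as a polynomial/rational function in these indeterminates. The network is regular if $\det(SR)\ne0$ algebraically. Let $B=\begin{pmatrix}-\mathrm{id}_{\mathcal E}&R\\ S&0\end{pmatrix}$, a square matrix with rows and columns indexed by the disjoint union $\mathcal E\sqcup\mathcal M$; for a regular network it is invertible over the field of rational functions in the $r_{jm}$. For $\alpha\in\mathcal E\sqcup\mathcal M$ set $z^\alpha=-B^{-1}e_\alpha$, and write $\alpha\leadsto\beta$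 for $\beta\in\mathcal E\sqcup\mathcal M$ if $z^\alpha_\beta$ is nonzero algebraically. *)

From HB Require Import structures.
From mathcomp Require Import all_boot all_order all_algebra.
From mathcomp Require Import fraction.
Set Implicit Arguments. Unset Strict Implicit. Unset Printing Implicit Defensive.
Import Order.TTheory GRing.Theory Num.Theory.
Local Open Scope ring_scope.

Unset Implicit Arguments.
(* Multivariate polynomial ring K[x_0, ..., x_{n-1}] built as iterated
   univariate polynomials: mpoly K 0 = K, mpoly K n.+1 = (mpoly K n)[x_n]. *)
Fixpoint mpoly (K : idomainType) (n : nat) : idomainType :=
  match n with
  | 0 => K
  | n'.+1 => {poly (mpoly K n')}
  end.

(* The indeterminate x_k in mpoly K n (for k < n; 0 otherwise). *)
Fixpoint mvar (K : idomainType) (n k : nat) : mpoly K n :=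
  match n return mpoly K n with
  | 0 => 0
  | n'.+1 => if k == n' then ('X : {poly (mpoly K n')})
             else ((mvar K n' k)%:P : {poly (mpoly K n')})
  end.

Fixpoint mconst (K : idomainType) (n : nat) (c : K) : mpoly K n :=
  match n return mpoly K n with
  | 0 => c
  | n'.+1 => ((mconst K n' c)%:P : {poly (mpoly K n')})
  end.

Set Implicit Arguments.

Section Network.
Variables (K : realFieldType) (E M : nat).

(* Polynomial ring in the E*M indeterminates r_{jm} (index j*M+m) and its
   field of fractions (field of rational functions). *)
Definition Rpoly : idomainType := mpoly K (E * M).
Definition Rfield : fieldType := {fraction Rpoly}.

(* y j m = y^j_m (input stoichiometry), yb j m = \bar y^j_m (output). *)
Variables (y yb : 'I_E -> 'I_M -> K).

(* m |- j  iff  y^j_m <> 0 *)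
Definition feeds (m : 'I_M) (j : 'I_E) : bool := y j m != 0.

Definition stoich : 'M[K]_(M, E) := \matrix_(m, j) (yb j m - y j m).

Definition rvar (j : 'I_E) (m : 'I_M) : Rfield :=
  tofrac (mvar K (E * M) (j * M + m)).

Definition rate : 'M[Rfield]_(E, M) :=
  \matrix_(j, m) (if feeds m j then rvar j m else 0).

Definition stoichF : 'M[Rfield]_(M, E) :=
  map_mx (fun c : K => tofrac (mconst K (E * M) c)) stoich.

Definition regular : bool := \det (stoichF *m rate) != 0.

(* B, indexed by E ⊔ M = 'I_(E + M)  (reactions first, via lshift;
   metabolites second, via rshift) *)
Definition Bmx : 'M[Rfield]_(E + M) := block_mx (- 1%:M) rate stoichF 0.

Definition zvec (a : 'I_(E + M)) : 'cV[Rfield]_(E + M) :=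
  - (invmx Bmx *m delta_mx a 0).

(* alpha ~> beta  iff  z^alpha_beta <> 0 algebraically *)
Definition leadsto (a b : 'I_(E + M)) : bool := zvec a b 0 != 0.

Definition single_child_witness (js : 'I_E) (ms : 'I_M) : Prop :=
  feeds ms js /\ forall j : 'I_E, feeds ms j -> j = js.

End Network.

From HB Require Import structures.
From mathcomp Require Import all_boot all_order all_algebra.
From mathcomp Require Import fraction.
From mathcomp Require Import zify.

Set Implicit Arguments.
Unset Strict Implicit.
Unset Printing Implicit Defensive.

Import Order.TTheory GRing.Theory Num.Theory.
Local Open Scope ring_scope.

(* A single child js with witness ms turns the ms-th column of R into
   r_{js ms} e_{js}.  Hence (0, -r^{-1} e_{ms}) solves B z = -e_{js}, i.e. it is
   z^{js}: it vanishes on every reaction and on every metabolite except ms.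
   Uniqueness of ms: two witnesses ms, m' give a nonzero vector of the kernel of
   R, which is impossible since S R is invertible. *)

Lemma mvar_neq0 (K : idomainType) (n k : nat) : (k < n)%N -> mvar K n k != 0.
Proof.
elim: n => [//|n IH] hk /=.
case: ifP => [_|/negbT hne]; first by rewrite polyX_eq0.
rewrite polyC_eq0 IH //.
by move: hk hne; rewrite ltnS leq_eqVlt => /orP[/eqP->|//]; rewrite eqxx.
Qed.

Lemma rvar_neq0 (K : realFieldType) (E M : nat) (j : 'I_E) (m : 'I_M) :
  rvar K j m != 0.
Proof.
rewrite /rvar tofrac_eq0 mvar_neq0 //.
have hj := ltn_ord j; have hm := ltn_ord m.
have : (j.+1 * M <= E * M)%N by rewrite leq_mul2r hj orbT.
rewrite mulSn; lia.
Qed.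

Lemma mulmx_unitmx_kernel0 (F : fieldType) (m n : nat)
    (S : 'M[F]_(m, n)) (R : 'M[F]_(n, m)) (v : 'cV[F]_m) :
  S *m R \in unitmx -> R *m v = 0 -> v = 0.
Proof. by move=> hSR hRv; rewrite -(mulKmx hSR v) -mulmxA hRv !mulmx0. Qed.

Lemma saddle_block_unitmx (F : fieldType) (m n : nat)
    (R : 'M[F]_(m, n)) (S : 'M[F]_(n, m)) :
  S *m R \in unitmx -> block_mx (- 1%:M) R S 0 \in unitmx.
Proof.
move=> hSR.
have hfact : block_mx (- 1%:M) R S 0 *m block_mx 1%:M R 0 1%:M
             = block_mx (- 1%:M) 0 S (S *m R).
  rewrite mulmx_block !mul0mx !mulmx0 !mulmx1 ?mul1mx !addr0 ?add0r.
  by rewrite mulNmx mul1mx addNr.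
suff : block_mx (- 1%:M) R S 0 *m block_mx 1%:M R 0 1%:M \in unitmx.
  by rewrite unitmx_mul => /andP[].
rewrite hfact unitmxE det_lblock unitrM.
move: hSR; rewrite unitmxE => ->; rewrite andbT.
by rewrite -scaleN1r detZ det1 mulr1 unitrX // unitrN1.
Qed.

Section SingleChild.
Variables (K : realFieldType) (E M : nat) (y yb : 'I_E -> 'I_M -> K).

Lemma rate_mul_delta_single_child (js : 'I_E) (ms : 'I_M) :
  single_child_witness y js ms ->
  rate y *m delta_mx ms (0 : 'I_1) = rvar K js ms *: delta_mx js (0 : 'I_1).
Proof.
case=> hf hu; rewrite -colE; apply/matrixP => i k.
rewrite !mxE (ord1 k) eqxx andbT.
have [->|hne] := eqVneq i js; first by rewrite hf mulr1.
rewrite mulr0; case hfi: (feeds y ms i) => //.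
by move: hne; rewrite (hu _ hfi) eqxx.
Qed.

Lemma single_child_witness_unique (js : 'I_E) (ms m' : 'I_M) :
  regular y yb -> single_child_witness y js ms ->
  single_child_witness y js m' -> m' = ms.
Proof.
move=> hreg hsc hsc'; apply/eqP; apply/negPn/negP => hne.
pose v : 'cV[Rfield K E M]_M := rvar K js m' *: delta_mx ms 0 - rvar K js ms *: delta_mx m' 0.
have hRv : rate y *m v = 0.
  rewrite mulmxBr -!scalemxAr (rate_mul_delta_single_child hsc).
  by rewrite (rate_mul_delta_single_child hsc') !scalerA mulrC subrr.
have hSR : stoichF y yb *m rate y \in unitmx by rewrite unitmxE unitfE.
have /(congr1 (fun A : 'cV[Rfield K E M]_M => A ms 0)) := mulmx_unitmx_kernel0 hSR hRv.
rewrite !mxE !eqxx eq_sym (negbTE hne) mulr0 subr0 mulr1 => /eqP.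
by rewrite (negbTE (rvar_neq0 K js m')).
Qed.

Lemma zvec_single_child (js : 'I_E) (ms : 'I_M) :
  regular y yb -> single_child_witness y js ms ->
  zvec y yb (lshift M js) = col_mx 0 (- ((rvar K js ms)^-1 *: delta_mx ms 0)).
Proof.
move=> hreg hsc.
have hB : Bmx y yb \in unitmx by apply: saddle_block_unitmx; rewrite unitmxE unitfE.
rewrite /zvec -mulmxN; apply: (canLR (mulKmx hB)).
rewrite /Bmx mul_block_col !mulmx0 !mul0mx ?add0r ?addr0.
rewrite mulmxN -scalemxAr (rate_mul_delta_single_child hsc) scalerA.
by rewrite mulVf ?rvar_neq0 // scale1r delta_mx_ushift opp_col_mx oppr0.
Qed.

End SingleChild.

Theorem mainTheorem5 (K : realFieldType) (E M : nat)
    (y yb : 'I_E -> 'I_M -> K)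
    (hy : forall j m, 0 <= y j m) (hyb : forall j m, 0 <= yb j m)
    (hrank : \rank (stoich y yb) = M)
    (hreg : regular y yb)
    (js : 'I_E) (ms : 'I_M) (hsc : single_child_witness y js ms) :
  (forall m' : 'I_M, single_child_witness y js m' -> m' = ms) /\
  (forall j : 'I_E, ~~ leadsto y yb (lshift M js) (lshift M j)) /\
  leadsto y yb (lshift M js) (rshift E ms) /\
  (forall m' : 'I_M, m' != ms -> ~~ leadsto y yb (lshift M js) (rshift E m')).
Proof.
have hz := zvec_single_child hreg hsc.
split; first by move=> m' /(single_child_witness_unique hreg hsc).
split; first by move=> j; rewrite /leadsto hz col_mxEu mxE eqxx.
split.
  by rewrite /leadsto hz col_mxEd !mxE !eqxx mulr1 oppr_eq0 invr_eq0 (rvar_neq0 K js ms).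
by move=> m' hne; rewrite /leadsto hz col_mxEd !mxE (negbTE hne) mulr0 oppr0 eqxx.
Qed.
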